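(* Let $\mathcal{G}_1$ be an $r_1$-regular graph on $n_1$ vertices and $\mathcal{G}_2$ an $r_2$-regular graph on $n_2$ vertices. Let $\mu_{11},\mu_{12},\ldots,\mu_{1n_1}$ be the Laplacian eigenvalues of $\mathcal{G}_1$. Then the Laplacian characteristic polynomial of $\mathcal{G}_1\circledast\mathcal{G}_2$ satisfies $$f(L_{\mathcal{G}_1\circledast \mathcal{G}_2},x)=(x-r_1n_2-n_2)^{n_1(n_2-1)}\, f(L_{\mathcal{G}_2},x-n_2)^{n_1}\cdot \prod_{i=1}^{n_1}\big[x-n_2-n_2\mu_{1i}-n_2\chi_{L_{\mathcal{G}_2}}(x-n_2)\big].$$
   Context: All graphs are simple, finite and undirected. For a graph $\mathcal{G}$ with adjacency matrix $A_{\mathcal{G}}$ and diagonal degree matrix $D_{\mathcal{G}}$, the Laplacian matrix is $L_{\mathcal{G}}=D_{\mathcal{G}}-A_{\mathcal{G}}$. For a square matrix $M$ of order $n$, $f(M,x)=\det(xI_n-M)$ is its characteristic polynomial. The Laplacian coronal of a graph $\mathcal{G}$ on $n$ vertices is the rational function $\chi_{L_{\mathcal{G}}}(x)=\mathbf{1}_n^T(xI_n-L_{\mathcal{G}})^{-1}\mathbf{1}_n$, where $\mathbf{1}_n$ is the all-ones column vector. The graph product $\mathcal{G}_1\circledast\mathcal{G}_2$ of $\mathcal{G}_1$ (vertices $u_1,\ldots,u_{n_1}$) and $\mathcal{G}_2$ (vertices $v_1,\ldots,v_{n_2}$) has vertex set $\{a_{ik},b_{ik}:1\le i\le n_1,1\le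 k\le n_2\}$ ($2n_1n_2$ vertices) and edges: (1) $a_{ik}a_{jl}$ for all $1\le k,l\le n_2$ whenever $u_iu_j\in E(\mathcal{G}_1)$; (2) $b_{ri}b_{rj}$ for all $1\le r\le n_1$ whenever $v_iv_j\in E(\mathcal{G}_2)$; (3) $a_{ip}b_{iq}$ for all $1\le i\le n_1$ and $1\le p,q\le n_2$. The identity is an identity of rational functions in $x$. *)

From HB Require Import structures.
From mathcomp Require Import all_boot all_order all_algebra.
Set Implicit Arguments. Unset Strict Implicit. Unset Printing Implicit Defensive.
Import Order.TTheory GRing.Theory Num.Theory.
Local Open Scope ring_scope.

Definition simple_graph (V : finType) (e : rel V) : Prop :=
  (forall u v, e u v = e v u) /\ (forall v, ~~ e v v).

Definition deg (V : finType) (e : rel V) (v : V) : nat := #|[set y | e v y]|.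

Definition regular (V : finType) (e : rel V) (r : nat) : Prop :=
  forall v, deg e v = r.

Definition lap_mx (R : pzRingType) (V : finType) (e : rel V) : 'M[R]_#|V| :=
  \matrix_(i, j) ((deg e (enum_val i))%:R * (i == j)%:R
                  - (e (enum_val i) (enum_val j))%:R).

Definition coronal (R : fieldType) (n : nat) (L : 'M[R]_n) (x : R) : R :=
  \sum_(i < n) \sum_(j < n) (invmx (x%:M - L)) i j.

(* The product G1 circledast G2: vertices inl (i,k) = a_{ik}, inr (r,i) = b_{ri}. *)
Definition prod_rel (n1 n2 : nat) (e1 : rel 'I_n1) (e2 : rel 'I_n2)
  : rel (('I_n1 * 'I_n2) + ('I_n1 * 'I_n2))%type :=
  fun u v =>
    match u, v with
    | inl (i, _), inl (j, _) => e1 i j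
    | inr (r, i), inr (s, j) => (r == s) && e2 i j
    | inl (i, _), inr (j, _) => i == j
    | inr (j, _), inl (i, _) => i == j
    end.

(* Order the vertices of G1 ⊛ G2 as all a_ik, then all b_ri, and let P be the
   0/1 matrix of the projection a_ik |-> i (i.e. I_n1 ⊗ 1_n2).  Then
     x I - L = [ c I + P A1 P^T     P P^T   ]     c = x - r1 n2 - n2,
               [ P P^T              I ⊗ Q2 ]     Q2 = (x - n2) I - L2.
   The Schur complement of I ⊗ Q2 is c I + P (A1 - chi I) P^T, because
   P^T (I ⊗ Q2^-1) P = chi I where chi = 1^T Q2^-1 1 is the coronal of L2.
   Sylvester's identity det (c I + U V) = c^(q-k) det (c I + V U) together with
   P^T P = n2 I turns its determinant into c^(n1 (n2 - 1)) det (c I + n2 (A1 - chi I)),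
   and by regularity c I + n2 A1 - n2 chi I = (x - n2 - n2 chi) I - n2 L1, whose
   determinant factors over the Laplacian eigenvalues of G1. *)

From HB Require Import structures.
From mathcomp Require Import all_boot all_order all_algebra perm.
From mathcomp Require Import ring.
Set Implicit Arguments. Unset Strict Implicit. Unset Printing Implicit Defensive.
Import Order.TTheory GRing.Theory Num.Theory.
Local Open Scope ring_scope.

Lemma horner_char_poly (R : comNzRingType) n (A : 'M[R]_n) c :
  (char_poly A).[c] = \det (c%:M - A).
Proof.
rewrite /char_poly -[(\det _).[c]]/(horner_eval c _) -det_map_mx.
congr (\det _); apply/matrixP => i j.
by rewrite !mxE /= rmorphB rmorphMn /= horner_evalE hornerX horner_evalE hornerC.
Qed.

Lemma det_block_schur (R : comNzRingType) m n (A : 'M[R]_m) B C (D : 'M[R]_n) W :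
  W *m D = 1 -> \det (block_mx A B C D) = \det D * \det (A - B *m W *m C).
Proof.
move=> WD.
have -> : block_mx A B C D =
    block_mx 1 (B *m W) 0 1 *m block_mx (A - B *m W *m C) 0 C D.
  by rewrite mulmx_block !mul1mx !mul0mx !add0r -!mulmxA WD mulmx1 subrK.
by rewrite det_mulmx det_ublock det_lblock !det1 !mul1r mulrC.
Qed.

Lemma det_scalar_add_mulmxC (R : comNzRingType) q k
  (U : 'M[R]_(q, k)) (V : 'M[R]_(k, q)) c :
  c ^+ k * \det (c%:M + U *m V) = c ^+ q * \det (c%:M + V *m U).
Proof.
(* [c, -U; V, 1] * [1, U; 0, c] = [c, 0; V, c + V U] *)
have -> : \det (c%:M + U *m V) = \det (block_mx (c%:M : 'M_q) (- U) V 1).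
  by rewrite (det_block_schur _ _ _ (mulmx1 1)) det1 mul1r mulmx1 mulNmx opprK.
have -> : c ^+ k = \det (block_mx (1 : 'M_q) U 0 (c%:M : 'M_k)).
  by rewrite det_ublock det1 mul1r det_scalar.
rewrite mulrC -det_mulmx mulmx_block !mulmx1 !mulmx0 mul1mx !addr0.
rewrite mul_scalar_mx mul_mx_scalar scalerN subrr.
by rewrite det_lblock det_scalar addrC.
Qed.

Lemma det_scalar_add_mulmx (R : idomainType) q k
  (U : 'M[R]_(q, k)) (V : 'M[R]_(k, q)) c : (k <= q)%N ->
  \det (c%:M + U *m V) = c ^+ (q - k) * \det (c%:M + V *m U).
Proof.
(* The scaled identity, read in {poly R} at c = 'X, where 'X ^+ k cancels. *)
move=> le_kq.
have char_polyNM m n (A : 'M[R]_(m, n)) B :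
    char_poly (- (A *m B)) = \det ('X%:M + map_mx polyC A *m map_mx polyC B).
  by rewrite /char_poly /char_poly_mx map_mxN map_mxM opprK.
have XkE : 'X^k * char_poly (- (U *m V)) = 'X^k * ('X^(q - k) * char_poly (- (V *m U))).
  by rewrite mulrA -exprD subnKC // !char_polyNM det_scalar_add_mulmxC.
have := congr1 (horner^~ c) (mulfI (monic_neq0 (monicXn _ k)) XkE).
by rewrite hornerM hornerXn !horner_char_poly !opprK.
Qed.

Lemma big_pair (R : Type) (idx : R) (op : Monoid.com_law idx) (I J : finType)
  (F : I * J -> R) :
  \big[op/idx]_p F p = \big[op/idx]_i \big[op/idx]_j F (i, j).
Proof. by rewrite pair_bigA; apply: eq_bigr => -[]. Qed.

Lemma sum_delta_mul (R : pzSemiRingType) (I : finType) (i : I) (F : I -> R) :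
  \sum_k (i == k)%:R * F k = F i.
Proof.
rewrite (bigD1 i) //= eqxx mul1r big1 ?addr0 // => k.
by rewrite eq_sym => /negbTE ->; rewrite mul0r.
Qed.

Lemma sum_enum_rank (R : nmodType) (T : finType) (F : 'I_#|T| -> R) :
  \sum_(i < #|T|) F i = \sum_(t : T) F (enum_rank t).
Proof. by rewrite (reindex (@enum_rank T)) //; apply: onW_bij; exact: enum_rank_bij. Qed.

Section FunMatrix.
Variable R : comNzRingType.
Implicit Types T S : finType.

Definition fun_mx T S (f : T -> S -> R) : 'M[R]_(#|T|, #|S|) :=
  \matrix_(i, j) f (enum_val i) (enum_val j).

Lemma fun_mxE T S (f : T -> S -> R) t s :
  fun_mx f (enum_rank t) (enum_rank s) = f t s.
Proof. by rewrite mxE !enum_rankK. Qed.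

Lemma eq_fun_mx T S (f g : T -> S -> R) :
  (forall t s, f t s = g t s) -> fun_mx f = fun_mx g.
Proof. by move=> fg; apply/matrixP => i j; rewrite !mxE fg. Qed.

Lemma fun_mx_enum_rank T S (A : 'M[R]_(#|T|, #|S|)) :
  fun_mx (fun t s => A (enum_rank t) (enum_rank s)) = A.
Proof. by apply/matrixP => i j; rewrite mxE !enum_valK. Qed.

Lemma fun_mxD T S (f g : T -> S -> R) :
  fun_mx f + fun_mx g = fun_mx (fun t s => f t s + g t s).
Proof. by apply/matrixP => i j; rewrite !mxE. Qed.

Lemma tr_fun_mx T S (f : T -> S -> R) : (fun_mx f)^T = fun_mx (fun s t => f t s).
Proof. by apply/matrixP => i j; rewrite !mxE. Qed.

Lemma mulmx_fun_mx T S (U : finType) (f : T -> S -> R) (g : S -> U -> R) :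
  fun_mx f *m fun_mx g = fun_mx (fun t u => \sum_s f t s * g s u).
Proof.
apply/matrixP => i j; rewrite !mxE sum_enum_rank.
by apply: eq_bigr => s _; rewrite !mxE enum_rankK.
Qed.

Lemma scalar_fun_mx T a : fun_mx (fun t u : T => a * (t == u)%:R) = a%:M.
Proof. by apply/matrixP => i j; rewrite !mxE (inj_eq enum_val_inj) mulr_natr. Qed.

Lemma det_reindex T (f : T -> T -> R) n (g : 'I_n -> T) :
  injective g -> n = #|T| ->
  \det (\matrix_(i, j) f (g i) (g j)) = \det (fun_mx f).
Proof.
move=> g_inj en; subst n.
have rk_inj : injective (enum_rank \o g) by move=> i j /enum_rank_inj /g_inj.
pose s := perm rk_inj.
have -> : \matrix_(i, j) f (g i) (g j) = row_perm s (col_perm s (fun_mx f)).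
  by apply/matrixP => i j; rewrite !mxE !permE /= !enum_rankK.
rewrite row_permE col_permE !det_mulmx !det_perm odd_permV mulrCA.
by rewrite -signr_addb addbb expr0 mulr1.
Qed.

Lemma det_fun_mx_inj T T' (h : T -> T') (f : T' -> T' -> R) :
  injective h -> #|T| = #|T'| ->
  \det (fun_mx (fun u v => f (h u) (h v))) = \det (fun_mx f).
Proof.
by move=> h_inj cardT; rewrite -(det_reindex f (inj_comp h_inj (@enum_val_inj T T))).
Qed.

Lemma det_fun_mx_sum T1 T2 (f : T1 + T2 -> T1 + T2 -> R) :
  \det (fun_mx f) =
  \det (block_mx (fun_mx (fun a b => f (inl a) (inl b)))
                 (fun_mx (fun a b => f (inl a) (inr b)))
                 (fun_mx (fun a b => f (inr a) (inl b)))
                 (fun_mx (fun a b => f (inr a) (inr b)))).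
Proof.
pose g (k : 'I_(#|T1| + #|T2|)) : T1 + T2 :=
  match split k with inl a => inl (enum_val a) | inr b => inr (enum_val b) end.
have g_inj : injective g.
  move=> k l; rewrite /g -[k]splitK -[l]splitK !unsplitK.
  by case: (split k) => a; case: (split l) => b // [] /enum_val_inj ->.
rewrite -(det_reindex f g_inj) ?card_sum //; congr (\det _).
apply/matrixP => i j; rewrite mxE /g -[i]splitK -[j]splitK !unsplitK.
by case: (split i) => a; case: (split j) => b;
  rewrite ?(block_mxEul, block_mxEur, block_mxEdl, block_mxEdr) !mxE.
Qed.

Section BlockDiagonal.
Variables I S : finType.

(* The kernels of I_I ⊗ A and of the projection I * S -> I. *)
Definition blockdiag_fun (A : 'M[R]_#|S|) (u v : I * S) : R :=
  (u.1 == v.1)%:R * A (enum_rank u.2) (enum_rank v.2).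

Definition fst_mx : 'M[R]_(#|{: I * S}|, #|I|) :=
  fun_mx (fun (u : I * S) i => (u.1 == i)%:R).

Lemma mulmx_blockdiag (A B : 'M_#|S|) :
  fun_mx (blockdiag_fun A) *m fun_mx (blockdiag_fun B) =
  fun_mx (blockdiag_fun (A *m B)).
Proof.
rewrite mulmx_fun_mx; apply: eq_fun_mx => -[i a] [j b].
rewrite /blockdiag_fun big_pair /= (eq_bigr (fun k => (i == k)%:R * ((k == j)%:R *
    \sum_c A (enum_rank a) (enum_rank c) * B (enum_rank c) (enum_rank b)))).
  by rewrite sum_delta_mul mxE sum_enum_rank.
by move=> k _; rewrite !mulr_sumr; apply: eq_bigr => c _; ring.
Qed.

Lemma blockdiag1 : fun_mx (blockdiag_fun 1) = 1%:M.
Proof.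
rewrite -scalar_fun_mx; apply: eq_fun_mx => -[i a] [j b].
by rewrite /blockdiag_fun mxE (inj_eq enum_rank_inj) xpair_eqE /= mul1r -natrM mulnb.
Qed.

Lemma fst_mx_mul_tr :
  fst_mx *m fst_mx^T = fun_mx (fun u v : I * S => (u.1 == v.1)%:R).
Proof.
rewrite tr_fun_mx mulmx_fun_mx; apply: eq_fun_mx => u v.
rewrite -(sum_delta_mul u.1 (fun i => (i == v.1)%:R)).
by apply: eq_bigr => i _; rewrite [v.1 == _]eq_sym.
Qed.

Lemma tr_fst_mx_mul : fst_mx^T *m fst_mx = (#|S|%:R)%:M.
Proof.
rewrite tr_fun_mx mulmx_fun_mx -scalar_fun_mx; apply: eq_fun_mx => i j.
rewrite big_pair /= (eq_bigr (fun k => (i == k)%:R * \sum_(s : S) (k == j)%:R)).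
  by rewrite sum_delta_mul sumr_const [RHS]mulrC mulr_natr.
by move=> k _; rewrite mulr_sumr; apply: eq_bigr => s _; rewrite eq_sym.
Qed.

Lemma fst_mx_conj (H : 'M[R]_#|I|) :
  fst_mx *m H *m fst_mx^T =
  fun_mx (fun u v : I * S => H (enum_rank u.1) (enum_rank v.1)).
Proof.
rewrite -[H]fun_mx_enum_rank tr_fun_mx !mulmx_fun_mx; apply: eq_fun_mx => u v.
under eq_bigr => i _ do rewrite sum_delta_mul mulrC.
by rewrite sum_delta_mul fun_mxE.
Qed.

Lemma tr_fst_mx_blockdiag (A : 'M[R]_#|S|) :
  fst_mx^T *m fun_mx (blockdiag_fun A) *m fst_mx =
  (\sum_(a < #|S|) \sum_(b < #|S|) A a b)%:M.
Proof.
rewrite -scalar_fun_mx tr_fun_mx !mulmx_fun_mx; apply: eq_fun_mx => i j.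
rewrite /blockdiag_fun.
have row_sum v : \sum_(u : I * S) (u.1 == i)%:R *
      ((u.1 == v.1)%:R * A (enum_rank u.2) (enum_rank v.2)) =
    (i == v.1)%:R * \sum_a A (enum_rank a) (enum_rank v.2).
  rewrite big_pair /= -(sum_delta_mul i (fun k =>
    (k == v.1)%:R * \sum_a A (enum_rank a) (enum_rank v.2))).
  apply: eq_bigr => k _.
  by rewrite [k == i]eq_sym !mulr_sumr; apply: eq_bigr => a _; ring.
under eq_bigr => v _ do rewrite row_sum.
rewrite big_pair /= mulrC sum_enum_rank.
under [in RHS]eq_bigr => a _ do rewrite sum_enum_rank.
rewrite -(sum_delta_mul i (fun k =>
  (k == j)%:R * \sum_a \sum_b A (enum_rank a) (enum_rank b))).
apply: eq_bigr => k _; rewrite [in RHS]exchange_big /= !mulr_sumr.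
by apply: eq_bigr => b _; ring.
Qed.

End BlockDiagonal.

Lemma det_blockdiag n S (A : 'M[R]_#|S|) :
  \det (fun_mx (blockdiag_fun (I := 'I_n) A)) = \det A ^+ n.
Proof.
elim: n => [|n IH].
  rewrite expr0 -(det1 R #|{: 'I_0 * S}|); congr (\det _).
  by apply/matrixP => i; have := ltn_ord i; rewrite {2}card_prod card_ord.
pose h (w : S + 'I_n * S) : 'I_n.+1 * S :=
  match w with inl a => (ord0, a) | inr u => (lift ord0 u.1, u.2) end.
have h_inj : injective h.
  pose h' (u : 'I_n.+1 * S) :=
    if unlift ord0 u.1 is Some i then inr (i, u.2) else inl u.2.
  by apply: (can_inj (g := h')) => -[a|[i a]]; rewrite /h' /= ?unlift_none ?liftK.
rewrite -(det_fun_mx_inj _ h_inj) ?card_sum ?card_prod ?card_ord ?mulSn //.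
rewrite det_fun_mx_sum
  (_ : fun_mx (fun a (v : 'I_n * S) => blockdiag_fun A (h (inl a)) (h (inr v))) = 0)
  ?det_lblock ?exprS -?IH; last first.
  by apply/matrixP => u v; rewrite !mxE /blockdiag_fun /= mul0r.
congr (_ * _); congr (\det _).
rewrite -[RHS]fun_mx_enum_rank; apply: eq_fun_mx => a b.
by rewrite /blockdiag_fun /= mul1r.
Qed.

End FunMatrix.

Section CoronaBlock.
Variables (R : fieldType) (n : nat) (S : finType).
Local Notation P := (fst_mx R 'I_n S).

Lemma det_corona_block c (H : 'M[R]_#|'I_n|) (Q : 'M[R]_#|S|) : Q \in unitmx ->
  \det (block_mx (c%:M + P *m H *m P^T) (P *m P^T) (P *m P^T)
                 (fun_mx (blockdiag_fun (I := 'I_n) Q))) =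
  \det Q ^+ n *
  \det (c%:M + P *m ((H - (\sum_(a < #|S|) \sum_(b < #|S|) invmx Q a b)%:M) *m P^T)).
Proof.
move=> Q_unit.
pose W := fun_mx (blockdiag_fun (I := 'I_n) (invmx Q)).
have WD : W *m fun_mx (blockdiag_fun Q) = 1.
  by rewrite mulmx_blockdiag mulVmx // blockdiag1.
rewrite (det_block_schur _ _ _ WD) det_blockdiag; congr (_ * \det _).
have -> : P *m P^T *m W *m (P *m P^T) =
    P *m (\sum_(a < #|S|) \sum_(b < #|S|) invmx Q a b)%:M *m P^T.
  by rewrite -tr_fst_mx_blockdiag !mulmxA.
by rewrite -addrA -mulmxBl -mulmxBr mulmxA.
Qed.

Lemma det_scalar_add_fst_mx c (M : 'M[R]_#|'I_n|) : (0 < #|S|)%N ->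
  \det (c%:M + P *m (M *m P^T)) = c ^+ (n * (#|S| - 1)) * \det (c%:M + #|S|%:R *: M).
Proof.
move=> S_gt0; rewrite det_scalar_add_mulmx; last by rewrite card_prod !card_ord leq_pmulr.
rewrite -mulmxA tr_fst_mx_mul mul_mx_scalar; congr (c ^+ _ * _).
by rewrite card_prod !card_ord mulnBr muln1.
Qed.

End CoronaBlock.

Lemma det_scalar_subZ (R : fieldType) n (A : 'M[R]_n) (I : finType) (mu : I -> R) c k :
  k != 0 -> char_poly A = \prod_i ('X - (mu i)%:P) ->
  \det (c%:M - k *: A) = \prod_i (c - k * mu i).
Proof.
move=> k_neq0 charA.
have card_I : #|I| = n.
  have := size_char_poly A; rewrite charA size_prod_XsubC [index_enum I]unlock.
  by rewrite -enumT -cardT => -[].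
have -> : c%:M - k *: A = k *: ((c / k)%:M - A).
  by rewrite scalerBr scale_scalar_mx mulrC divfK.
rewrite detZ -horner_char_poly charA horner_prod -card_I -prodr_const -big_split.
by apply: eq_bigr => i _; rewrite hornerXsubC /= mulrBr mulrC divfK.
Qed.

Lemma deg_sum (V : finType) (e : rel V) v : deg e v = (\sum_y e v y)%N.
Proof.
rewrite /deg -sum1dep_card big_mkcond /=.
by apply: eq_bigr => y _; case: (e v y).
Qed.

Lemma scalar_sub_lap_mx (R : comNzRingType) (V : finType) (e : rel V) x :
  x%:M - lap_mx R e =
  fun_mx (fun u v => (x - (deg e u)%:R) * (u == v)%:R + (e u v)%:R).
Proof.
apply/matrixP => i j; rewrite !mxE (inj_eq enum_val_inj).
by rewrite -[x *+ _]mulr_natr; ring.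
Qed.

Lemma lap_mx_regular (R : comNzRingType) (V : finType) (e : rel V) r :
  regular e r -> lap_mx R e = r%:R%:M - fun_mx (fun u v => (e u v)%:R).
Proof.
move=> reg_e; rewrite -scalar_fun_mx; apply/matrixP => i j.
by rewrite !mxE reg_e (inj_eq enum_val_inj).
Qed.

Section ProductGraph.
Variables (n1 n2 : nat) (e1 : rel 'I_n1) (e2 : rel 'I_n2).
Local Notation G := (prod_rel e1 e2).

Lemma deg_prod_inl i a : deg G (inl (i, a)) = (deg e1 i * n2 + n2)%N.
Proof.
rewrite !deg_sum big_sumType /= !big_pair /= big_distrl /=.
congr (_ + _)%N; first by apply: eq_bigr => j _; rewrite sum_nat_const card_ord mulnC.
rewrite (bigD1 i) //= eqxx sum_nat_const card_ord muln1 big1 ?addn0 // => j.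
by rewrite eq_sym => /negbTE ->; rewrite big1.
Qed.

Lemma deg_prod_inr i a : deg G (inr (i, a)) = (deg e2 a + n2)%N.
Proof.
rewrite !deg_sum big_sumType /= !big_pair /= addnC.
congr (_ + _)%N.
  rewrite (bigD1 i) //= eqxx [X in (_ + X)%N]big1 ?addn0 // => j /negbTE i_neq_j.
  by rewrite big1 // => b _; rewrite eq_sym i_neq_j.
rewrite (bigD1 i) //= eqxx sum_nat_const card_ord muln1 big1 ?addn0 // => j.
by move=> /negbTE ->; rewrite big1.
Qed.

End ProductGraph.

Section CoronaProduct.
Variables (R : fieldType) (n1 n2 r1 : nat) (e1 : rel 'I_n1) (e2 : rel 'I_n2) (x : R).
Hypothesis reg1 : regular e1 r1.
Local Notation P := (fst_mx R 'I_n1 'I_n2).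
Local Notation A1 := (fun_mx (fun i j : 'I_n1 => (e1 i j)%:R : R)).
Local Notation Q2 := ((x - n2%:R)%:M - lap_mx R e2).

Lemma det_char_prod_mx :
  \det (x%:M - lap_mx R (prod_rel e1 e2)) =
  \det (block_mx ((x - (r1 * n2)%:R - n2%:R)%:M + P *m A1 *m P^T) (P *m P^T) (P *m P^T)
                 (fun_mx (blockdiag_fun (I := 'I_n1) Q2))).
Proof.
rewrite scalar_sub_lap_mx det_fun_mx_sum fst_mx_conj fst_mx_mul_tr.
rewrite scalar_sub_lap_mx -scalar_fun_mx fun_mxD.
congr (\det (block_mx _ _ _ _)); apply: eq_fun_mx => -[i a] [j b].
- rewrite deg_prod_inl reg1 fun_mxE /= natrD natrM.
  have -> : (inl (i, a) == inl (j, b) :> _ + _) = ((i, a) == (j, b)) by [].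
  by ring.
- by rewrite /= mulr0 add0r.
- by rewrite /= mulr0 add0r eq_sym.
- rewrite deg_prod_inr /blockdiag_fun fun_mxE /= natrD.
  have -> : (inr (i, a) == inr (j, b) :> _ + _) = ((i, a) == (j, b)) by [].
  by rewrite xpair_eqE; case: (i == j); rewrite /= ?mul1r ?mul0r ?mulr0 ?addr0 //; ring.
Qed.

Lemma corona_quotient_mx c :
  (x - (r1 * n2)%:R - n2%:R)%:M + n2%:R *: (A1 - c%:M) =
  (x - n2%:R - n2%:R * c)%:M - n2%:R *: lap_mx R e1.
Proof.
rewrite (lap_mx_regular R reg1); apply/matrixP => i j; rewrite !mxE natrM.
by case: (i == j); rewrite ?mulr1n ?mulr0n; ring.
Qed.

End CoronaProduct.

Theorem theorem1 (R : realFieldType) (n1 n2 r1 r2 : nat)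
  (e1 : rel 'I_n1) (e2 : rel 'I_n2) (mu : 'I_n1 -> R) :
  (0 < n1)%N -> (0 < n2)%N ->
  simple_graph e1 -> simple_graph e2 ->
  regular e1 r1 -> regular e2 r2 ->
  char_poly (lap_mx R e1) = \prod_(i < n1) ('X - (mu i)%:P) ->
  forall x : R,
    (x - n2%:R)%:M - lap_mx R e2 \in unitmx ->
    (char_poly (lap_mx R (prod_rel e1 e2))).[x] =
      (x - (r1 * n2)%:R - n2%:R) ^+ (n1 * (n2 - 1))
      * (char_poly (lap_mx R e2)).[x - n2%:R] ^+ n1
      * \prod_(i < n1) (x - n2%:R - n2%:R * mu i
                          - n2%:R * coronal (lap_mx R e2) (x - n2%:R)).
Proof.
move=> _ n2_gt0 _ _ reg1 _ char1 x Q2_unit.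
have n2_neq0 : n2%:R != 0 :> R by rewrite pnatr_eq0 -lt0n.
rewrite horner_char_poly (det_char_prod_mx e2 x reg1) det_corona_block //.
rewrite -/(coronal (lap_mx R e2) (x - n2%:R)).
rewrite det_scalar_add_fst_mx ?card_ord //.
rewrite [X in X%:R *: _]card_ord [X in (X - 1)%N]card_ord.
rewrite corona_quotient_mx //.
rewrite (det_scalar_subZ _ n2_neq0 char1) -horner_char_poly mulrCA mulrA.
by congr (_ * _); apply: eq_bigr => i _; ring.
Qed.
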